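(* Let $\psi:\Sigma\to\mathbb{H}^2\times\mathbb{R}\subset\mathbb{L}^4$ be a conformal immersion with regular vertical projection and constant mean curvature $1/2$ with respect to its canonical orientation, with induced metric $\lambda|dz|^2$, angle function $u>0$, unit normal $\eta$, vertical projection $N$, hyperbolic Gauss map $G$, and Abresch–Rosenberg differential $Q\,dz^2$ with $Q$ nowhere zero. Then $$\psi^\sharp=-\psi+\frac2u(G,1)=-\psi+\frac{2}{u^2}(\eta+N)$$ is a conformal immersion $\Sigma\to\mathbb{H}^2\times\mathbb{R}$ with regular vertical projection and constant mean curvature $1/2$ with respect to its canonical orientation; its hyperbolic Gauss map is $G$, its angle function is $u$, and its metric is $\lambda^\sharp|dz|^2$ with $\lambda^\sharp=\frac{16|Q|^2}{\lambda u^4}$.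
   Context: $\mathbb{L}^4=(\mathbb{R}^4,\langle,\rangle=-dx_0^2+dx_1^2+dx_2^2+dx_3^2)$, $\mathbb{H}^2=\{x\in\mathbb{L}^3:\langle x,x\rangle=-1,x_0>0\}$ in the first three coordinates, $\mathbb{H}^2\times\mathbb{R}\subset\mathbb{L}^4$; linear operations are in $\mathbb{L}^4$. For $\psi=(N,h)$: $\eta=(\hat N,u)$ is the unit normal tangent to $\mathbb{H}^2\times\mathbb{R}$, $u$ the angle function; regular vertical projection means $u\ne0$, canonical orientation $u>0$; hyperbolic Gauss map $G$ by $(G,1)=(\eta+N)/u$; $p=-\langle\psi_z,\eta_z\rangle$, $H$ mean curvature, Abresch–Rosenberg differential $Q=2Hp+h_z^2$. *)

From Stdlib Require Import Reals.
From Coquelicot Require Import Coquelicot.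
Open Scope R_scope.

Record L4 := mk4 { c0 : R; c1 : R; c2 : R; c3 : R }.

Definition lor (a b : L4) : R :=
  - c0 a * c0 b + c1 a * c1 b + c2 a * c2 b + c3 a * c3 b.

Definition add4 (a b : L4) : L4 :=
  mk4 (c0 a + c0 b) (c1 a + c1 b) (c2 a + c2 b) (c3 a + c3 b).
Definition scal4 (k : R) (a : L4) : L4 :=
  mk4 (k * c0 a) (k * c1 a) (k * c2 a) (k * c3 a).
Definition opp4 (a : L4) : L4 := scal4 (-1) a.

(* H^2 x R : first three coordinates in the hyperboloid model of H^2 *)
Definition in_H2xR (a : L4) : Prop :=
  - c0 a ^ 2 + c1 a ^ 2 + c2 a ^ 2 = -1 /\ 0 < c0 a.

(* vertical projection N of a point, viewed in L^4 as (N,0) *)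
Definition vproj (a : L4) : L4 := mk4 (c0 a) (c1 a) (c2 a) 0.

Definition sdom := R -> R -> Prop.
Definition open_dom (U : sdom) : Prop := open (fun p : R * R => U (fst p) (snd p)).

Definition Dx (f : R -> R -> R) : R -> R -> R := fun x y => Derive (fun t => f t y) x.
Definition Dy (f : R -> R -> R) : R -> R -> R := fun x y => Derive (fun t => f x t) y.

Definition C0 (U : sdom) (f : R -> R -> R) : Prop :=
  forall x y, U x y -> continuous (fun p : R * R => f (fst p) (snd p)) (x, y).

Fixpoint Ck (k : nat) (U : sdom) (f : R -> R -> R) : Prop :=
  match k with
  | O => C0 U f
  | S k' => (forall x y, U x y -> ex_derive (fun t => f t y) x /\ ex_derive (fun t => f x t) y)
            /\ C0 U f /\ Ck k' U (Dx f) /\ Ck k' U (Dy f)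
  end.

Definition smooth (U : sdom) (f : R -> R -> R) : Prop := forall k, Ck k U f.

Definition vmap := R -> R -> L4.
Definition comp0 (F : vmap) : R -> R -> R := fun x y => c0 (F x y).
Definition comp1 (F : vmap) : R -> R -> R := fun x y => c1 (F x y).
Definition comp2 (F : vmap) : R -> R -> R := fun x y => c2 (F x y).
Definition comp3 (F : vmap) : R -> R -> R := fun x y => c3 (F x y).

Definition smooth4 (U : sdom) (F : vmap) : Prop :=
  smooth U (comp0 F) /\ smooth U (comp1 F) /\ smooth U (comp2 F) /\ smooth U (comp3 F).

Definition Dx4 (F : vmap) : vmap := fun x y =>
  mk4 (Dx (comp0 F) x y) (Dx (comp1 F) x y) (Dx (comp2 F) x y) (Dx (comp3 F) x y).
Definition Dy4 (F : vmap) : vmap := fun x y =>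
  mk4 (Dy (comp0 F) x y) (Dy (comp1 F) x y) (Dy (comp2 F) x y) (Dy (comp3 F) x y).

(* conformal factor lambda: metric lambda |dz|^2 *)
Definition lam (psi : vmap) : R -> R -> R := fun x y => lor (Dx4 psi x y) (Dx4 psi x y).

Definition conformal_immersion (U : sdom) (psi : vmap) : Prop :=
  smooth4 U psi /\
  forall x y, U x y ->
    in_H2xR (psi x y) /\
    0 < lam psi x y /\
    lor (Dy4 psi x y) (Dy4 psi x y) = lam psi x y /\
    lor (Dx4 psi x y) (Dy4 psi x y) = 0.

(* eta is the (smooth) unit normal of psi tangent to H^2 x R, with angle
   function u = c3 eta; "canonical" = u > 0 (in particular u <> 0, i.e. regular
   vertical projection). *)
Definition unit_normal (U : sdom) (psi eta : vmap) : Prop :=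
  smooth4 U eta /\
  forall x y, U x y ->
    lor (eta x y) (eta x y) = 1 /\
    lor (eta x y) (vproj (psi x y)) = 0 /\
    lor (eta x y) (Dx4 psi x y) = 0 /\
    lor (eta x y) (Dy4 psi x y) = 0.

Definition angle (eta : vmap) : R -> R -> R := comp3 eta.

Definition canonical_normal (U : sdom) (psi eta : vmap) : Prop :=
  unit_normal U psi eta /\ forall x y, U x y -> 0 < angle eta x y.

(* mean curvature: psi_xx + psi_yy = 2 lambda H eta + (component along (N,0)) *)
Definition mean_curv (psi eta : vmap) : R -> R -> R := fun x y =>
  lor (add4 (Dx4 (Dx4 psi) x y) (Dy4 (Dy4 psi) x y)) (eta x y) / (2 * lam psi x y).

(* hyperbolic Gauss map, as the L^4 vector (G,1) = (eta + N)/u *)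
Definition hypGauss (psi eta : vmap) : vmap := fun x y =>
  scal4 (/ angle eta x y) (add4 (eta x y) (vproj (psi x y))).

Definition dz (f : R -> R -> R) (x y : R) : C := (Dx f x y / 2, - (Dy f x y / 2)).

Definition lor_z (psi eta : vmap) (x y : R) : C :=
  Cplus (Cplus (Cplus
    (Copp (Cmult (dz (comp0 psi) x y) (dz (comp0 eta) x y)))
    (Cmult (dz (comp1 psi) x y) (dz (comp1 eta) x y)))
    (Cmult (dz (comp2 psi) x y) (dz (comp2 eta) x y)))
    (Cmult (dz (comp3 psi) x y) (dz (comp3 eta) x y)).

Definition pdiff (psi eta : vmap) (x y : R) : C := Copp (lor_z psi eta x y).

Definition ARQ (psi eta : vmap) (x y : R) : C :=
  Cplus (Cmult (RtoC (2 * mean_curv psi eta x y)) (pdiff psi eta x y))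
        (Cmult (dz (comp3 psi) x y) (dz (comp3 psi) x y)).

Definition psi_sharp (psi eta : vmap) : vmap := fun x y =>
  add4 (opp4 (psi x y))
       (scal4 (2 / (angle eta x y) ^ 2) (add4 (eta x y) (vproj (psi x y)))).

Definition lam_sharp (psi eta : vmap) (x y : R) : R :=
  16 * (Cmod (ARQ psi eta x y)) ^ 2 / (lam psi x y * (angle eta x y) ^ 4).

(* At each point psi_x, psi_y, eta and the vertical projection N form an orthogonal frame of L^4
   with norms lam, lam, 1, -1, so every Lorentz product expands in it.  Differentiating the
   identities defining psi and eta gives the frame coordinates of eta_x, eta_y (Weingarten), of
   psi_xx + psi_yy and of the vertical direction e3; the last yields lam u^2 = lam - h_x^2 - h_y^2.
   The derivatives of psi# = -psi + (2/u^2)(eta + N) are explicit in these vectors, and with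
   eta# := eta + N - N# every claim (conformality with lam# = 16 |Q|^2 / (lam u^4), eta# a unit
   normal, H# = 1/2) becomes a rational identity in lam, u, h_x, h_y and the second fundamental
   form L = <eta, psi_xx>, M = <eta, psi_xy>, <eta, psi_yy> = lam - L (this is H = 1/2), true
   modulo that one relation.  The time component of psi# stays positive by a reverse
   Cauchy-Schwarz inequality in L^3. *)

From Stdlib Require Import Reals Lra.
From Coquelicot Require Import Coquelicot.
Open Scope R_scope.
Set Bullet Behavior "Strict Subproofs".

(** * Smooth functions on an open domain *)

(* [pd true] is [Dx] and [pd false] is [Dy]: indexing the partial derivative by a direction
   lets every calculus rule below be proved once for both. *)
Definition slice {T : Type} (d : bool) (f : R -> R -> T) (x y : R) : R -> T :=
  if d then fun t => f t y else fun t => f x t.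
Definition at_dir (d : bool) (x y : R) : R := if d then x else y.
Definition pd (d : bool) : (R -> R -> R) -> R -> R -> R := if d then Dx else Dy.

Lemma slice_binop {A B C : Type} (op : A -> B -> C) d f g x y :
  slice d (fun a b => op (f a b) (g a b)) x y = fun t => op (slice d f x y t) (slice d g x y t).
Proof. destruct d; reflexivity. Qed.

Lemma slice_unop {A B : Type} (h : A -> B) d f x y :
  slice d (fun a b => h (f a b)) x y = fun t => h (slice d f x y t).
Proof. destruct d; reflexivity. Qed.

Lemma pdE d f x y : pd d f x y = Derive (slice d f x y) (at_dir d x y).
Proof. destruct d; reflexivity. Qed.

Lemma open_dom_ball U x y : open_dom U -> U x y ->
  exists e : posreal, forall a b, Rabs (a - x) < e -> Rabs (b - y) < e -> U a b.
Proof.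
  intros HU Hxy. destruct (HU (x, y) Hxy) as [e He].
  exists e. intros a b Ha Hb. apply (He (a, b)). split; assumption.
Qed.

Lemma open_dom_slice U d x y : open_dom U -> U x y ->
  locally (at_dir d x y) (slice d U x y).
Proof.
  intros HU Hxy. destruct (open_dom_ball U x y HU Hxy) as [e He].
  exists e. intros t Ht. assert (H0 : Rabs 0 < e) by (rewrite Rabs_R0; apply cond_pos).
  destruct d; simpl in *; apply He; try assumption; rewrite Rminus_eq_0; exact H0.
Qed.

Lemma C0_continuity_2d U f x y : C0 U f -> U x y -> continuity_2d_pt f x y.
Proof. intros H Hxy. apply continuity_2d_pt_filterlim, H, Hxy. Qed.

Lemma C0_intro U f : (forall x y, U x y -> continuity_2d_pt f x y) -> C0 U f.
Proof. intros H x y Hxy. apply continuity_2d_pt_filterlim, H, Hxy. Qed.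

Lemma Ck_S_iff k U f : Ck (S k) U f <->
  (forall d x y, U x y -> ex_derive (slice d f x y) (at_dir d x y)) /\
  C0 U f /\ (forall d, Ck k U (pd d f)).
Proof.
  split.
  - intros [Hd [H0 [Hx Hy]]]. split; [|split; [exact H0|]].
    + intros [|] x y Hxy; apply (Hd x y Hxy).
    + intros [|]; assumption.
  - intros [Hd [H0 Hk]]. split; [|split; [exact H0|split; [apply (Hk true)|apply (Hk false)]]].
    intros x y Hxy. split; [apply (Hd true x y Hxy)|apply (Hd false x y Hxy)].
Qed.

Lemma Ck_S_Ck k : forall U f, Ck (S k) U f -> Ck k U f.
Proof.
  induction k as [|k IH]; intros U f H; apply Ck_S_iff in H as [Hd [H0 Hk]].
  - exact H0.
  - apply Ck_S_iff. repeat split; auto.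
Qed.

Lemma Derive_div_sq c (g : R -> R) t : ex_derive g t -> g t <> 0 ->
  Derive (fun s => c / g s ^ 2) t = -2 * c * Derive g t / g t ^ 3.
Proof.
  intros. apply is_derive_unique. auto_derive; [repeat split; auto|].
  change (fun x => g x) with g. field. auto.
Qed.

Lemma Derive_div_cube c (g h : R -> R) t : ex_derive g t -> ex_derive h t -> g t <> 0 ->
  Derive (fun s => c * h s / g s ^ 3) t = c * Derive h t / g t ^ 3 - 3 * c * h t * Derive g t / g t ^ 4.
Proof.
  intros. apply is_derive_unique. auto_derive; repeat split; auto.
  - repeat apply Rmult_integral_contrapositive_currified; auto.
  - change (fun x => g x) with g. change (fun x => h x) with h. field. auto.
Qed.

Section SmoothFunctions.
Variable U : sdom.
Hypothesis HU : open_dom U.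

Lemma eq_on_slice (f g : R -> R -> R) d x y : (forall a b, U a b -> f a b = g a b) -> U x y ->
  locally (at_dir d x y) (fun t => slice d f x y t = slice d g x y t).
Proof.
  intros Hfg Hxy. generalize (open_dom_slice U d x y HU Hxy). apply filter_imp.
  destruct d; intro t; apply Hfg.
Qed.

Lemma pd_ext d f g x y : (forall a b, U a b -> f a b = g a b) -> U x y ->
  pd d f x y = pd d g x y.
Proof. intros Hfg Hxy. rewrite !pdE. apply Derive_ext_loc, eq_on_slice; assumption. Qed.

Lemma Ck_ext k : forall f g, (forall x y, U x y -> f x y = g x y) -> Ck k U f -> Ck k U g.
Proof.
  assert (HC0 : forall f g, (forall x y, U x y -> f x y = g x y) -> C0 U f -> C0 U g).
  { intros f g Hfg Hf x y Hxy.
    apply continuous_ext_loc with (g := fun p : R * R => f (fst p) (snd p)); [|exact (Hf x y Hxy)].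
    generalize (HU (x, y) Hxy). apply filter_imp. intros p Hp. apply Hfg, Hp. }
  induction k as [|k IH]; intros f g Hfg Hf; [exact (HC0 f g Hfg Hf)|].
  apply Ck_S_iff in Hf as [Hd [H0 Hk]]. apply Ck_S_iff. split; [|split].
  - intros d x y Hxy. apply (ex_derive_ext_loc (slice d f x y)); [|apply Hd, Hxy].
    apply eq_on_slice; assumption.
  - exact (HC0 f g Hfg H0).
  - intros d. apply (IH (pd d f)); [|apply Hk]. intros x y Hxy. apply pd_ext; assumption.
Qed.

Lemma Ck_const k c : Ck k U (fun _ _ => c).
Proof.
  revert c. induction k as [|k IH]; intros c.
  - apply C0_intro. intros. apply continuity_2d_pt_const.
  - apply Ck_S_iff. split; [|split].
    + intros [|] x y _; apply ex_derive_const.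
    + apply C0_intro. intros. apply continuity_2d_pt_const.
    + intros d. apply (Ck_ext k (fun _ _ => 0)); [|apply IH].
      intros x y _. rewrite pdE. destruct d; simpl; symmetry; apply Derive_const.
Qed.

Lemma Ck_plus k : forall f g, Ck k U f -> Ck k U g -> Ck k U (fun x y => f x y + g x y).
Proof.
  induction k as [|k IH]; intros f g Hf Hg.
  - apply C0_intro. intros x y Hxy.
    apply continuity_2d_pt_plus; apply (C0_continuity_2d U); assumption.
  - apply Ck_S_iff in Hf as [Hdf [H0f Hkf]], Hg as [Hdg [H0g Hkg]]. apply Ck_S_iff. split; [|split].
    + intros d x y Hxy. rewrite (slice_binop Rplus).
      apply (ex_derive_plus (slice d f x y)); auto.
    + apply C0_intro. intros x y Hxy.
      apply continuity_2d_pt_plus; apply (C0_continuity_2d U); assumption.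
    + intros d. apply (Ck_ext k (fun x y => pd d f x y + pd d g x y)); [|apply IH; auto].
      intros x y Hxy. rewrite !pdE, (slice_binop Rplus).
      symmetry; apply (Derive_plus (slice d f x y)); auto.
Qed.

Lemma Ck_mult k : forall f g, Ck k U f -> Ck k U g -> Ck k U (fun x y => f x y * g x y).
Proof.
  induction k as [|k IH]; intros f g Hf Hg.
  - apply C0_intro. intros x y Hxy.
    apply continuity_2d_pt_mult; apply (C0_continuity_2d U); assumption.
  - pose proof (Ck_S_Ck k U f Hf) as Hf'. pose proof (Ck_S_Ck k U g Hg) as Hg'.
    apply Ck_S_iff in Hf as [Hdf [H0f Hkf]], Hg as [Hdg [H0g Hkg]]. apply Ck_S_iff. split; [|split].
    + intros d x y Hxy. rewrite (slice_binop Rmult).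
      apply (ex_derive_mult (slice d f x y)); auto.
    + apply C0_intro. intros x y Hxy.
      apply continuity_2d_pt_mult; apply (C0_continuity_2d U); assumption.
    + intros d. apply (Ck_ext k (fun x y => pd d f x y * g x y + f x y * pd d g x y)).
      * intros x y Hxy. rewrite !pdE, (slice_binop Rmult).
        rewrite Derive_mult by auto. destruct d; reflexivity.
      * apply Ck_plus; apply IH; auto.
Qed.

Lemma Ck_inv k : forall f, Ck k U f -> (forall x y, U x y -> f x y <> 0) ->
  Ck k U (fun x y => / f x y).
Proof.
  induction k as [|k IH]; intros f Hf Hnz.
  - apply C0_intro. intros x y Hxy.
    apply continuity_2d_pt_inv; [apply (C0_continuity_2d U); assumption|apply Hnz, Hxy].
  - pose proof (Ck_S_Ck k U f Hf) as Hf'.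
    apply Ck_S_iff in Hf as [Hd [H0 Hk]]. apply Ck_S_iff. split; [|split].
    + intros d x y Hxy. rewrite (slice_unop Rinv).
      apply (ex_derive_inv (slice d f x y)); [auto|destruct d; apply Hnz, Hxy].
    + apply C0_intro. intros x y Hxy.
      apply continuity_2d_pt_inv; [apply (C0_continuity_2d U); assumption|apply Hnz, Hxy].
    + intros d. apply (Ck_ext k (fun x y => - 1 * (pd d f x y * (/ f x y * / f x y)))).
      * intros x y Hxy. rewrite !pdE, (slice_unop Rinv).
        assert (Hfx : slice d f x y (at_dir d x y) <> 0) by (destruct d; apply Hnz, Hxy).
        rewrite Derive_inv; auto. destruct d; simpl in *; field; auto.
      * apply Ck_mult; [apply Ck_const|]. apply Ck_mult; [apply Hk|]. apply Ck_mult; auto.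
Qed.

Lemma smooth_const c : smooth U (fun _ _ => c).
Proof. intro k; apply Ck_const. Qed.
Lemma smooth_plus f g : smooth U f -> smooth U g -> smooth U (fun x y => f x y + g x y).
Proof. intros Hf Hg k; apply Ck_plus; auto. Qed.
Lemma smooth_mult f g : smooth U f -> smooth U g -> smooth U (fun x y => f x y * g x y).
Proof. intros Hf Hg k; apply Ck_mult; auto. Qed.
Lemma smooth_inv f : smooth U f -> (forall x y, U x y -> f x y <> 0) ->
  smooth U (fun x y => / f x y).
Proof. intros Hf Hnz k; apply Ck_inv; auto. Qed.
Lemma smooth_ext f g : (forall x y, U x y -> f x y = g x y) -> smooth U f -> smooth U g.
Proof. intros Hfg Hf k; apply (Ck_ext k f); auto. Qed.
Lemma smooth_pd d f : smooth U f -> smooth U (pd d f).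
Proof. intros Hf k. apply Ck_S_iff, Hf. Qed.
Lemma smooth_ex_derive d f x y : smooth U f -> U x y ->
  ex_derive (slice d f x y) (at_dir d x y).
Proof. intros Hf Hxy. apply (proj1 (Ck_S_iff 0 U f) (Hf 1%nat)), Hxy. Qed.
Lemma smooth_continuity_2d f x y : smooth U f -> U x y -> continuity_2d_pt f x y.
Proof. intros Hf Hxy. apply (C0_continuity_2d U f x y (Hf 0%nat) Hxy). Qed.

Lemma smooth_Dx_Dy f x y : smooth U f -> U x y -> Dx (Dy f) x y = Dy (Dx f) x y.
Proof.
  intros Hf Hxy. apply Schwarz.
  - destruct (open_dom_ball U x y HU Hxy) as [e He]. exists e. intros a b Ha Hb.
    pose proof (He a b Ha Hb) as Hab.
    repeat split; [apply (smooth_ex_derive true f)|apply (smooth_ex_derive false f)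
                  |apply (smooth_ex_derive true (Dy f))|apply (smooth_ex_derive false (Dx f))];
    auto; [apply (smooth_pd false)|apply (smooth_pd true)]; exact Hf.
  - apply (smooth_continuity_2d (Dx (Dy f))); auto. apply (smooth_pd true), (smooth_pd false), Hf.
  - apply (smooth_continuity_2d (Dy (Dx f))); auto. apply (smooth_pd false), (smooth_pd true), Hf.
Qed.

Lemma pd_plus d f g x y : smooth U f -> smooth U g -> U x y ->
  pd d (fun a b => f a b + g a b) x y = pd d f x y + pd d g x y.
Proof.
  intros Hf Hg Hxy. rewrite !pdE, (slice_binop Rplus).
  apply Derive_plus; apply smooth_ex_derive; assumption.
Qed.

Lemma pd_mult d f g x y : smooth U f -> smooth U g -> U x y ->
  pd d (fun a b => f a b * g a b) x y = pd d f x y * g x y + f x y * pd d g x y.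
Proof.
  intros Hf Hg Hxy. rewrite !pdE, (slice_binop Rmult).
  rewrite Derive_mult by (apply smooth_ex_derive; assumption). destruct d; reflexivity.
Qed.

Lemma pd_const_on d f c x y : (forall a b, U a b -> f a b = c) -> U x y -> pd d f x y = 0.
Proof.
  intros Hf Hxy. rewrite (pd_ext d f (fun _ _ => c)); auto.
  rewrite pdE. destruct d; simpl; apply Derive_const.
Qed.

Lemma pd_div_sq d c g x y : smooth U g -> U x y -> g x y <> 0 ->
  pd d (fun a b => c / g a b ^ 2) x y = -2 * c * pd d g x y / g x y ^ 3.
Proof.
  intros Hg Hxy Hnz. rewrite !pdE, (slice_unop (fun v => c / v ^ 2)).
  rewrite Derive_div_sq; [destruct d; reflexivity|apply smooth_ex_derive; auto|destruct d; auto].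
Qed.

Lemma pd_div_cube d c g h x y : smooth U g -> smooth U h -> U x y -> g x y <> 0 ->
  pd d (fun a b => c * h a b / g a b ^ 3) x y
  = c * pd d h x y / g x y ^ 3 - 3 * c * h x y * pd d g x y / g x y ^ 4.
Proof.
  intros Hg Hh Hxy Hnz. rewrite !pdE, (slice_binop (fun hv gv => c * hv / gv ^ 3)).
  rewrite Derive_div_cube; [destruct d; reflexivity|apply smooth_ex_derive; auto..|destruct d; auto].
Qed.

End SmoothFunctions.

(** * The Lorentz form of L^4 *)

Lemma L4_ext a b : c0 a = c0 b -> c1 a = c1 b -> c2 a = c2 b -> c3 a = c3 b -> a = b.
Proof. destruct a, b; simpl; intros; subst; reflexivity. Qed.

Lemma lor_sym a b : lor a b = lor b a.
Proof. unfold lor; ring. Qed.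
Lemma lor_add_l a b c : lor (add4 a b) c = lor a c + lor b c.
Proof. unfold lor; simpl; ring. Qed.
Lemma lor_add_r a b c : lor c (add4 a b) = lor c a + lor c b.
Proof. unfold lor; simpl; ring. Qed.
Lemma lor_scal_l k a c : lor (scal4 k a) c = k * lor a c.
Proof. unfold lor; simpl; ring. Qed.
Lemma lor_scal_r k a c : lor c (scal4 k a) = k * lor c a.
Proof. unfold lor; simpl; ring. Qed.
Lemma lor_vproj_l a c : lor (vproj a) c = lor a c - c3 a * c3 c.
Proof. unfold lor; simpl; ring. Qed.
Lemma lor_vproj_r a c : lor c (vproj a) = lor c a - c3 c * c3 a.
Proof. unfold lor; simpl; ring. Qed.
Lemma c3_add a b : c3 (add4 a b) = c3 a + c3 b. Proof. reflexivity. Qed.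
Lemma c3_scal k a : c3 (scal4 k a) = k * c3 a. Proof. reflexivity. Qed.
Lemma c3_vproj a : c3 (vproj a) = 0. Proof. reflexivity. Qed.
Lemma vproj_add a b : vproj (add4 a b) = add4 (vproj a) (vproj b).
Proof. apply L4_ext; simpl; ring. Qed.
Lemma vproj_scal k a : vproj (scal4 k a) = scal4 k (vproj a).
Proof. apply L4_ext; simpl; ring. Qed.
Lemma vproj_idem a : vproj (vproj a) = vproj a.
Proof. apply L4_ext; simpl; ring. Qed.

Definition e3 : L4 := mk4 0 0 0 1.
Lemma lor_e3 a : lor e3 a = c3 a. Proof. unfold lor; simpl; ring. Qed.

Create HintDb lor_expand.
#[export] Hint Rewrite lor_add_l lor_add_r lor_scal_l lor_scal_r lor_vproj_l lor_vproj_r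
  c3_add c3_scal c3_vproj vproj_add vproj_scal vproj_idem : lor_expand.

Definition det3 a b c d e f g h i : R := a*(e*i - f*h) - b*(d*i - f*g) + c*(d*h - e*g).
Definition det4 (a00 a01 a02 a03 a10 a11 a12 a13 a20 a21 a22 a23 a30 a31 a32 a33 : R) : R :=
  a00 * det3 a11 a12 a13 a21 a22 a23 a31 a32 a33
  - a01 * det3 a10 a12 a13 a20 a22 a23 a30 a32 a33
  + a02 * det3 a10 a11 a13 a20 a21 a23 a30 a31 a33
  - a03 * det3 a10 a11 a12 a20 a21 a22 a30 a31 a32.
Definition det_rows (f1 f2 f3 f4 : L4) : R :=
  det4 (c0 f1) (c1 f1) (c2 f1) (c3 f1) (c0 f2) (c1 f2) (c2 f2) (c3 f2)
       (c0 f3) (c1 f3) (c2 f3) (c3 f3) (c0 f4) (c1 f4) (c2 f4) (c3 f4).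

(* The Gram matrix is F diag(-1,1,1,1) F^T. *)
Lemma det4_gram f1 f2 f3 f4 :
  det4 (lor f1 f1) (lor f1 f2) (lor f1 f3) (lor f1 f4) (lor f2 f1) (lor f2 f2) (lor f2 f3) (lor f2 f4)
       (lor f3 f1) (lor f3 f2) (lor f3 f3) (lor f3 f4) (lor f4 f1) (lor f4 f2) (lor f4 f3) (lor f4 f4)
  = - det_rows f1 f2 f3 f4 ^ 2.
Proof. destruct f1, f2, f3, f4. unfold det_rows, det4, det3, lor; simpl. ring. Qed.

(* Cramer's rule: det F * w_j is a determinant whose j-th column is (lor w f_i)_i. *)
Lemma lor_orthogonal_zero f1 f2 f3 f4 w : det_rows f1 f2 f3 f4 <> 0 ->
  lor w f1 = 0 -> lor w f2 = 0 -> lor w f3 = 0 -> lor w f4 = 0 -> w = mk4 0 0 0 0.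
Proof.
  intros Hdet H1 H2 H3 H4.
  assert (Hcol : forall v, det_rows f1 f2 f3 f4 * v = 0 -> v = 0).
  { intros v Hv. apply Rmult_integral in Hv as [Hv|Hv]; [contradiction|exact Hv]. }
  apply L4_ext; simpl; apply Hcol.
  - replace (det_rows f1 f2 f3 f4 * c0 w) with (- det4
      (lor w f1) (c1 f1) (c2 f1) (c3 f1) (lor w f2) (c1 f2) (c2 f2) (c3 f2)
      (lor w f3) (c1 f3) (c2 f3) (c3 f3) (lor w f4) (c1 f4) (c2 f4) (c3 f4)).
    + rewrite H1, H2, H3, H4. unfold det4, det3. ring.
    + destruct f1, f2, f3, f4, w. unfold det_rows, det4, det3, lor; simpl. ring.
  - replace (det_rows f1 f2 f3 f4 * c1 w) with (det4
      (c0 f1) (lor w f1) (c2 f1) (c3 f1) (c0 f2) (lor w f2) (c2 f2) (c3 f2)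
      (c0 f3) (lor w f3) (c2 f3) (c3 f3) (c0 f4) (lor w f4) (c2 f4) (c3 f4)).
    + rewrite H1, H2, H3, H4. unfold det4, det3. ring.
    + destruct f1, f2, f3, f4, w. unfold det_rows, det4, det3, lor; simpl. ring.
  - replace (det_rows f1 f2 f3 f4 * c2 w) with (det4
      (c0 f1) (c1 f1) (lor w f1) (c3 f1) (c0 f2) (c1 f2) (lor w f2) (c3 f2)
      (c0 f3) (c1 f3) (lor w f3) (c3 f3) (c0 f4) (c1 f4) (lor w f4) (c3 f4)).
    + rewrite H1, H2, H3, H4. unfold det4, det3. ring.
    + destruct f1, f2, f3, f4, w. unfold det_rows, det4, det3, lor; simpl. ring.
  - replace (det_rows f1 f2 f3 f4 * c3 w) with (det4
      (c0 f1) (c1 f1) (c2 f1) (lor w f1) (c0 f2) (c1 f2) (c2 f2) (lor w f2)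
      (c0 f3) (c1 f3) (c2 f3) (lor w f3) (c0 f4) (c1 f4) (c2 f4) (lor w f4)).
    + rewrite H1, H2, H3, H4. unfold det4, det3. ring.
    + destruct f1, f2, f3, f4, w. unfold det_rows, det4, det3, lor; simpl. ring.
Qed.

Lemma lor_frame_expansion (f1 f2 f3 f4 a b : L4) (l : R) : l <> 0 ->
  lor f1 f1 = l -> lor f2 f2 = l -> lor f3 f3 = 1 -> lor f4 f4 = -1 ->
  lor f1 f2 = 0 -> lor f1 f3 = 0 -> lor f1 f4 = 0 ->
  lor f2 f3 = 0 -> lor f2 f4 = 0 -> lor f3 f4 = 0 ->
  lor a b = lor a f1 * lor b f1 / l + lor a f2 * lor b f2 / l
            + lor a f3 * lor b f3 - lor a f4 * lor b f4.
Proof.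
  intros Hl G11 G22 G33 G44 G12 G13 G14 G23 G24 G34.
  assert (Hdet : det_rows f1 f2 f3 f4 <> 0).
  { intro H0. pose proof (det4_gram f1 f2 f3 f4) as E.
    rewrite (lor_sym f2 f1), (lor_sym f3 f1), (lor_sym f4 f1), (lor_sym f3 f2),
      (lor_sym f4 f2), (lor_sym f4 f3), H0, G11, G22, G33, G44, G12, G13, G14, G23, G24, G34 in E.
    unfold det4, det3 in E. apply Hl. nra. }
  set (w := add4 a (add4 (add4 (scal4 (- (lor a f1 / l)) f1) (scal4 (- (lor a f2 / l)) f2))
                         (add4 (scal4 (- lor a f3) f3) (scal4 (lor a f4) f4)))).
  assert (Hw : w = mk4 0 0 0 0).
  { apply (lor_orthogonal_zero f1 f2 f3 f4); auto; unfold w; autorewrite with lor_expand;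
    rewrite ?(lor_sym f2 f1), ?(lor_sym f3 f1), ?(lor_sym f4 f1), ?(lor_sym f3 f2),
      ?(lor_sym f4 f2), ?(lor_sym f4 f3), ?G11, ?G22, ?G33, ?G44, ?G12, ?G13, ?G14, ?G23, ?G24, ?G34;
    field; exact Hl. }
  assert (Hwb : lor w b = 0) by (rewrite Hw; unfold lor; simpl; ring).
  unfold w in Hwb. autorewrite with lor_expand in Hwb.
  rewrite (lor_sym f1 b), (lor_sym f2 b), (lor_sym f3 b), (lor_sym f4 b) in Hwb. lra.
Qed.

(** * Smooth maps into L^4 *)

Definition pd4 (d : bool) : vmap -> vmap := if d then Dx4 else Dy4.

Lemma c0_pd4 d F x y : c0 (pd4 d F x y) = pd d (comp0 F) x y. Proof. destruct d; reflexivity. Qed.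
Lemma c1_pd4 d F x y : c1 (pd4 d F x y) = pd d (comp1 F) x y. Proof. destruct d; reflexivity. Qed.
Lemma c2_pd4 d F x y : c2 (pd4 d F x y) = pd d (comp2 F) x y. Proof. destruct d; reflexivity. Qed.
Lemma c3_pd4 d F x y : c3 (pd4 d F x y) = pd d (comp3 F) x y. Proof. destruct d; reflexivity. Qed.

Lemma Derive_lor (a0 a1 a2 a3 b0 b1 b2 b3 : R -> R) t :
  ex_derive a0 t -> ex_derive a1 t -> ex_derive a2 t -> ex_derive a3 t ->
  ex_derive b0 t -> ex_derive b1 t -> ex_derive b2 t -> ex_derive b3 t ->
  Derive (fun s => - a0 s * b0 s + a1 s * b1 s + a2 s * b2 s + a3 s * b3 s) t =
  (- Derive a0 t * b0 t + Derive a1 t * b1 t + Derive a2 t * b2 t + Derive a3 t * b3 t)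
  + (- a0 t * Derive b0 t + a1 t * Derive b1 t + a2 t * Derive b2 t + a3 t * Derive b3 t).
Proof.
  intros. apply is_derive_unique. auto_derive; [tauto|].
  change (fun x => a0 x) with a0; change (fun x => a1 x) with a1;
  change (fun x => a2 x) with a2; change (fun x => a3 x) with a3;
  change (fun x => b0 x) with b0; change (fun x => b1 x) with b1;
  change (fun x => b2 x) with b2; change (fun x => b3 x) with b3. ring.
Qed.

Section SmoothMaps.
Variable U : sdom.
Hypothesis HU : open_dom U.

Lemma smooth4_add F G : smooth4 U F -> smooth4 U G -> smooth4 U (fun a b => add4 (F a b) (G a b)).
Proof.
  intros (?&?&?&?) (?&?&?&?).
  refine (conj _ (conj _ (conj _ _))); apply (smooth_plus U HU); assumption.
Qed.
Lemma smooth4_scal s F : smooth U s -> smooth4 U F -> smooth4 U (fun a b => scal4 (s a b) (F a b)).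
Proof.
  intros Hs (?&?&?&?).
  refine (conj _ (conj _ (conj _ _))); apply (smooth_mult U HU); assumption.
Qed.
Lemma smooth4_opp F : smooth4 U F -> smooth4 U (fun a b => opp4 (F a b)).
Proof. apply smooth4_scal, (smooth_const U HU). Qed.
Lemma smooth4_vproj F : smooth4 U F -> smooth4 U (fun a b => vproj (F a b)).
Proof.
  intros (?&?&?&?).
  refine (conj _ (conj _ (conj _ _))); try assumption. exact (smooth_const U HU 0).
Qed.
Lemma smooth4_pd4 d F : smooth4 U F -> smooth4 U (pd4 d F).
Proof.
  intros (?&?&?&?). destruct d; refine (conj _ (conj _ (conj _ _)));
  first [apply (smooth_pd U true) | apply (smooth_pd U false)]; assumption.
Qed.
Lemma pd4_ext d F G x y : (forall a b, U a b -> F a b = G a b) -> U x y ->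
  pd4 d F x y = pd4 d G x y.
Proof.
  intros E Hxy. apply L4_ext; rewrite ?c0_pd4, ?c1_pd4, ?c2_pd4, ?c3_pd4; apply (pd_ext U HU); auto;
  intros a b Hab; unfold comp0, comp1, comp2, comp3; rewrite E; auto.
Qed.

Lemma pd4_add d F G x y : smooth4 U F -> smooth4 U G -> U x y ->
  pd4 d (fun a b => add4 (F a b) (G a b)) x y = add4 (pd4 d F x y) (pd4 d G x y).
Proof.
  intros (?&?&?&?) (?&?&?&?) Hxy. apply L4_ext; simpl; rewrite ?c0_pd4, ?c1_pd4, ?c2_pd4, ?c3_pd4;
  [apply (pd_plus U d (comp0 F) (comp0 G))|apply (pd_plus U d (comp1 F) (comp1 G))
  |apply (pd_plus U d (comp2 F) (comp2 G))|apply (pd_plus U d (comp3 F) (comp3 G))]; assumption.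
Qed.

Lemma pd4_scal d s F x y : smooth U s -> smooth4 U F -> U x y ->
  pd4 d (fun a b => scal4 (s a b) (F a b)) x y
  = add4 (scal4 (pd d s x y) (F x y)) (scal4 (s x y) (pd4 d F x y)).
Proof.
  intros Hs (?&?&?&?) Hxy. apply L4_ext; simpl; rewrite ?c0_pd4, ?c1_pd4, ?c2_pd4, ?c3_pd4;
  [apply (pd_mult U d s (comp0 F))|apply (pd_mult U d s (comp1 F))
  |apply (pd_mult U d s (comp2 F))|apply (pd_mult U d s (comp3 F))]; assumption.
Qed.

Lemma pd4_opp d F x y : pd4 d (fun a b => opp4 (F a b)) x y = opp4 (pd4 d F x y).
Proof. destruct d; apply L4_ext; apply Derive_scal. Qed.

Lemma pd4_vproj d F x y : pd4 d (fun a b => vproj (F a b)) x y = vproj (pd4 d F x y).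
Proof.
  destruct d; apply L4_ext; try reflexivity; apply (Derive_const 0).
Qed.

Lemma pd_lor d F G x y : smooth4 U F -> smooth4 U G -> U x y ->
  pd d (fun a b => lor (F a b) (G a b)) x y = lor (pd4 d F x y) (G x y) + lor (F x y) (pd4 d G x y).
Proof.
  intros (F0&F1&F2&F3) (G0&G1&G2&G3) Hxy.
  pose proof (fun f => smooth_ex_derive U d f x y) as Hd.
  destruct d; simpl in Hd.
  - apply (Derive_lor (fun t => c0 (F t y)) (fun t => c1 (F t y)) (fun t => c2 (F t y))
      (fun t => c3 (F t y)) (fun t => c0 (G t y)) (fun t => c1 (G t y)) (fun t => c2 (G t y))
      (fun t => c3 (G t y))); [apply (Hd (comp0 F))|apply (Hd (comp1 F))|apply (Hd (comp2 F))
      |apply (Hd (comp3 F))|apply (Hd (comp0 G))|apply (Hd (comp1 G))|apply (Hd (comp2 G))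
      |apply (Hd (comp3 G))]; assumption.
  - apply (Derive_lor (fun t => c0 (F x t)) (fun t => c1 (F x t)) (fun t => c2 (F x t))
      (fun t => c3 (F x t)) (fun t => c0 (G x t)) (fun t => c1 (G x t)) (fun t => c2 (G x t))
      (fun t => c3 (G x t))); [apply (Hd (comp0 F))|apply (Hd (comp1 F))|apply (Hd (comp2 F))
      |apply (Hd (comp3 F))|apply (Hd (comp0 G))|apply (Hd (comp1 G))|apply (Hd (comp2 G))
      |apply (Hd (comp3 G))]; assumption.
Qed.

Lemma pd_lor_const_on d F G c x y : smooth4 U F -> smooth4 U G -> U x y ->
  (forall a b, U a b -> lor (F a b) (G a b) = c) ->
  lor (pd4 d F x y) (G x y) + lor (F x y) (pd4 d G x y) = 0.
Proof.
  intros HF HG Hxy E. rewrite <- (pd_lor d F G x y); auto.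
  apply (pd_const_on U HU d _ c); auto.
Qed.

End SmoothMaps.

(** * The sharp construction *)

(* The vertical projection N, kept folded so that expanding Lorentz products never unfolds it. *)
Definition vert (psi : vmap) : vmap := fun a b => vproj (psi a b).

Lemma pd4_vert d psi x y : pd4 d (vert psi) x y = vproj (pd4 d psi x y).
Proof. apply pd4_vproj. Qed.
Lemma c3_vert psi x y : c3 (vert psi x y) = 0.
Proof. reflexivity. Qed.
Lemma vproj_vert psi x y : vproj (vert psi x y) = vert psi x y.
Proof. apply vproj_idem. Qed.
#[export] Hint Rewrite c3_vert vproj_vert : lor_expand.

Definition sharp_factor (eta : vmap) : R -> R -> R := fun a b => 2 / angle eta a b ^ 2.

Lemma psi_sharpE psi eta : psi_sharp psi eta =
  fun a b => add4 (opp4 (psi a b)) (scal4 (sharp_factor eta a b) (add4 (eta a b) (vert psi a b))).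
Proof. reflexivity. Qed.

(* Forced by asking for the same angle function u and hyperbolic Gauss map (G,1) = (eta# + N#)/u. *)
Definition eta_sharp (psi eta : vmap) : vmap := fun a b =>
  add4 (add4 (eta a b) (vert psi a b)) (opp4 (vproj (psi_sharp psi eta a b))).

Lemma vproj_psi_sharp psi eta x y : vproj (psi_sharp psi eta x y) =
  add4 (opp4 (vert psi x y)) (scal4 (sharp_factor eta x y) (add4 (vproj (eta x y)) (vert psi x y))).
Proof. apply L4_ext; unfold psi_sharp, sharp_factor, vert, angle, comp3; simpl; ring. Qed.

Lemma angle_eta_sharp psi eta x y : angle (eta_sharp psi eta) x y = angle eta x y.
Proof. unfold angle, comp3, eta_sharp, psi_sharp; simpl. ring. Qed.

Lemma hypGauss_eta_sharp psi eta x y :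
  hypGauss (psi_sharp psi eta) (eta_sharp psi eta) x y = hypGauss psi eta x y.
Proof.
  unfold hypGauss. rewrite angle_eta_sharp. f_equal.
  apply L4_ext; unfold eta_sharp, psi_sharp, vert; simpl; ring.
Qed.

Lemma psi_sharp_hypGauss psi eta x y : angle eta x y <> 0 ->
  psi_sharp psi eta x y = add4 (opp4 (psi x y)) (scal4 (2 / angle eta x y) (hypGauss psi eta x y)).
Proof. intros Hu. apply L4_ext; unfold psi_sharp, hypGauss; simpl; field; exact Hu. Qed.

(* Reverse Cauchy-Schwarz in L^3: e = (e0,e1,e2) is orthogonal to the future unit timelike vector
   N = (N0,N1,N2), so e0^2 <= (N0^2 - 1)(1 - u^2). *)
Lemma sharp_time_component_pos N0 N1 N2 e0 e1 e2 u :
  0 < N0 -> - N0 ^ 2 + N1 ^ 2 + N2 ^ 2 = -1 -> - N0 * e0 + N1 * e1 + N2 * e2 = 0 ->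
  - e0 ^ 2 + e1 ^ 2 + e2 ^ 2 = 1 - u ^ 2 -> 0 < u -> u ^ 2 <= 1 ->
  0 < - N0 + 2 / u ^ 2 * (e0 + N0).
Proof.
  intros HN0 HN He Hee Hu Hu1.
  set (A := 2 / u ^ 2).
  assert (HA : A * u ^ 2 = 2) by (unfold A; field; lra).
  assert (HA2 : 2 <= A) by (apply (Rmult_le_reg_r (u ^ 2)); [nra|]; rewrite HA; nra).
  assert (CS : (N1 * e1 + N2 * e2) ^ 2 <= (N1 ^ 2 + N2 ^ 2) * (e1 ^ 2 + e2 ^ 2)).
  { pose proof (pow2_ge_0 (N1 * e2 - N2 * e1)). nra. }
  assert (Ke : e0 ^ 2 <= (N0 ^ 2 - 1) * (1 - u ^ 2)).
  { replace (N1 * e1 + N2 * e2) with (N0 * e0) in CS by lra.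
    replace (N1 ^ 2 + N2 ^ 2) with (N0 ^ 2 - 1) in CS by lra.
    replace (e1 ^ 2 + e2 ^ 2) with (e0 ^ 2 + 1 - u ^ 2) in CS by lra. nra. }
  replace (- N0 + A * (e0 + N0)) with ((A - 1) * N0 + A * e0) by ring.
  destruct (Rle_or_lt 0 e0) as [He0|He0]; [nra|].
  assert (K2 : A ^ 2 * e0 ^ 2 < (A - 1) ^ 2 * N0 ^ 2).
  { assert (A ^ 2 * e0 ^ 2 <= A ^ 2 * ((N0 ^ 2 - 1) * (1 - u ^ 2))) by (apply Rmult_le_compat_l; nra).
    assert (A ^ 2 * ((N0 ^ 2 - 1) * (1 - u ^ 2)) = (A ^ 2 - 2 * A) * (N0 ^ 2 - 1)).
    { replace (A ^ 2 * ((N0 ^ 2 - 1) * (1 - u ^ 2)))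
        with (A ^ 2 * (N0 ^ 2 - 1) - A * (A * u ^ 2) * (N0 ^ 2 - 1)) by ring.
      rewrite HA. ring. }
    assert (0 <= A * (A - 2)) by nra.
    assert (0 < N0 ^ 2) by nra.
    lra. }
  assert (0 < (A - 1) * N0) by nra.
  nra.
Qed.

Lemma Cmod_sq (z : C) : Cmod z ^ 2 = fst z ^ 2 + snd z ^ 2.
Proof. unfold Cmod. rewrite pow2_sqrt; [reflexivity|]. nra. Qed.

Lemma ARQ_re F G x y : fst (ARQ F G x y) =
  - mean_curv F G x y
    * (lor (pd4 true F x y) (pd4 true G x y) - lor (pd4 false F x y) (pd4 false G x y)) / 2
  + (c3 (pd4 true F x y) ^ 2 - c3 (pd4 false F x y) ^ 2) / 4.
Proof. unfold ARQ, pdiff, lor_z, dz, lor, Cplus, Cmult, Copp, RtoC; simpl. field. Qed.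

Lemma ARQ_im F G x y : snd (ARQ F G x y) =
  mean_curv F G x y
  * (lor (pd4 true F x y) (pd4 false G x y) + lor (pd4 false F x y) (pd4 true G x y)) / 2
  - c3 (pd4 true F x y) * c3 (pd4 false F x y) / 2.
Proof. unfold ARQ, pdiff, lor_z, dz, lor, Cplus, Cmult, Copp, RtoC; simpl. field. Qed.

(* The identities below hold only modulo [Hrel : l u^2 = l - hx^2 - hy^2]: when hx = hy = 0 it
   forces u = 1, otherwise it is solved for l. *)
Ltac close_modulo_angle_relation l u hx hy Hrel :=
  let Hz := fresh "Hz" in
  destruct (Req_dec (hx ^ 2 + hy ^ 2) 0) as [Hz|Hz];
  [ assert (hx = 0) by nra; assert (hy = 0) by nra; subst hx hy;
    assert (u ^ 2 = 1) by (apply (Rmult_eq_reg_l l); [lra|lra]);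
    assert (u = 1) by nra; subst u; field; lra
  | let Hsum := fresh "Hsum" in
    assert (Hsum : hx ^ 2 + hy ^ 2 = l * (1 - u ^ 2)) by lra;
    assert (1 - u ^ 2 <> 0) by (intro; apply Hz; rewrite Hsum; nra);
    let El := fresh "El" in
    assert (El : l = (hx ^ 2 + hy ^ 2) / (1 - u ^ 2)) by (rewrite Hsum; field; auto);
    subst l; field; repeat split; try lra; try nra ].

(** * CMC 1/2 conformal immersions and their sharp transform *)

Section ConformalImmersion.
Variables (U : sdom) (psi eta : vmap).
Hypothesis HU : open_dom U.
Hypothesis Hpsi : conformal_immersion U psi.
Hypothesis Heta : unit_normal U psi eta.

Lemma smooth_psi : smooth4 U psi. Proof. apply Hpsi. Qed.
Lemma smooth_eta : smooth4 U eta. Proof. apply Heta. Qed.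
Lemma smooth_vert : smooth4 U (vert psi).
Proof. apply (smooth4_vproj U HU), smooth_psi. Qed.
Lemma smooth_pd4_psi d : smooth4 U (pd4 d psi).
Proof. apply (smooth4_pd4 U), smooth_psi. Qed.
Lemma smooth_pd4_eta d : smooth4 U (pd4 d eta).
Proof. apply (smooth4_pd4 U), smooth_eta. Qed.

Lemma lam_pos x y : U x y -> 0 < lam psi x y.
Proof. intros Hxy. apply (proj2 Hpsi x y Hxy). Qed.

Lemma lor_pd4_psi_sq d x y : U x y -> lor (pd4 d psi x y) (pd4 d psi x y) = lam psi x y.
Proof. intros Hxy. destruct d; [reflexivity|apply (proj2 Hpsi x y Hxy)]. Qed.
Lemma lor_psi_x_psi_y x y : U x y -> lor (pd4 true psi x y) (pd4 false psi x y) = 0.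
Proof. intros Hxy. apply (proj2 Hpsi x y Hxy). Qed.
Lemma lor_eta_eta x y : U x y -> lor (eta x y) (eta x y) = 1.
Proof. intros Hxy. apply (proj2 Heta x y Hxy). Qed.
Lemma lor_eta_vert x y : U x y -> lor (eta x y) (vert psi x y) = 0.
Proof. intros Hxy. apply (proj2 Heta x y Hxy). Qed.
Lemma lor_eta_pd4_psi d x y : U x y -> lor (eta x y) (pd4 d psi x y) = 0.
Proof. intros Hxy. destruct d; apply (proj2 Heta x y Hxy). Qed.
Lemma lor_vert_vert x y : U x y -> lor (vert psi x y) (vert psi x y) = -1.
Proof.
  intros Hxy. destruct (proj2 Hpsi x y Hxy) as [[H _] _].
  rewrite <- H. unfold lor; simpl. ring.
Qed.

Lemma lor_vert_pd4_psi d x y : U x y -> lor (vert psi x y) (pd4 d psi x y) = 0.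
Proof.
  intros Hxy.
  pose proof (pd_lor_const_on U HU d _ _ (-1) x y smooth_vert smooth_vert Hxy lor_vert_vert) as E.
  rewrite (pd4_vert d psi), (lor_sym (vproj (pd4 d psi x y))), lor_vproj_r, c3_vert in E. lra.
Qed.

Lemma lor_pd4_eta_eta d x y : U x y -> lor (pd4 d eta x y) (eta x y) = 0.
Proof.
  intros Hxy. pose proof (pd_lor_const_on U HU d _ _ 1 x y smooth_eta smooth_eta Hxy lor_eta_eta) as E.
  rewrite (lor_sym (eta x y)) in E. lra.
Qed.

Lemma lor_pd4_eta_pd4_psi d e x y : U x y ->
  lor (pd4 d eta x y) (pd4 e psi x y) = - lor (eta x y) (pd4 d (pd4 e psi) x y).
Proof.
  intros Hxy. pose proof (pd_lor_const_on U HU d _ _ 0 x y smooth_eta (smooth_pd4_psi e) Hxy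
    (lor_eta_pd4_psi e)). lra.
Qed.

Lemma lor_pd4_eta_vert d x y : U x y ->
  lor (pd4 d eta x y) (vert psi x y) = c3 (eta x y) * c3 (pd4 d psi x y).
Proof.
  intros Hxy. pose proof (pd_lor_const_on U HU d _ _ 0 x y smooth_eta smooth_vert Hxy lor_eta_vert) as E.
  rewrite (pd4_vert d psi), (lor_vproj_r (pd4 d psi x y)), (lor_eta_pd4_psi d) in E; auto. lra.
Qed.

Lemma pd4_psi_comm x y : U x y -> pd4 false (pd4 true psi) x y = pd4 true (pd4 false psi) x y.
Proof.
  intros Hxy. destruct smooth_psi as (S0&S1&S2&S3).
  apply L4_ext; symmetry; apply (smooth_Dx_Dy U HU); assumption.
Qed.

Lemma lor_pd4_pd4_psi_vert d x y : U x y ->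
  lor (pd4 d (pd4 d psi) x y) (vert psi x y) = c3 (pd4 d psi x y) ^ 2 - lam psi x y.
Proof.
  intros Hxy.
  pose proof (pd_lor_const_on U HU d _ _ 0 x y (smooth_pd4_psi d) smooth_vert Hxy
    (fun a b Hab => eq_trans (lor_sym _ _) (lor_vert_pd4_psi d a b Hab))) as E.
  rewrite (pd4_vert d psi), (lor_vproj_r (pd4 d psi x y)), (lor_pd4_psi_sq d) in E; auto. lra.
Qed.

Lemma lor_pd4_pd4_eta_eta d x y : U x y ->
  lor (pd4 d (pd4 d eta) x y) (eta x y) = - lor (pd4 d eta x y) (pd4 d eta x y).
Proof.
  intros Hxy. pose proof (pd_lor_const_on U HU d _ _ 0 x y (smooth_pd4_eta d) smooth_eta Hxy
    (lor_pd4_eta_eta d)). lra.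
Qed.

Lemma lor_pd4_pd4_eta_vert d x y : U x y ->
  lor (pd4 d (pd4 d eta) x y) (vert psi x y)
  = 2 * c3 (pd4 d eta x y) * c3 (pd4 d psi x y) + c3 (eta x y) * c3 (pd4 d (pd4 d psi) x y)
    - lor (pd4 d eta x y) (pd4 d psi x y).
Proof.
  intros Hxy.
  assert (E : pd d (fun a b => lor (pd4 d eta a b) (vert psi a b)) x y
              = pd d (fun a b => comp3 eta a b * comp3 (pd4 d psi) a b) x y).
  { apply (pd_ext U HU); [|exact Hxy]. intros a b Hab. apply lor_pd4_eta_vert, Hab. }
  rewrite (pd_lor U), (pd_mult U), (pd4_vert d psi), lor_vproj_r, <- !c3_pd4 in E;
    auto using smooth_pd4_eta, smooth_vert, smooth_pd4_psi.
  - unfold comp3 in E. lra.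
  - apply smooth_eta.
  - apply smooth_pd4_psi.
Qed.

Lemma lor_laplacian_psi_pd4_psi d x y : U x y ->
  lor (pd4 true (pd4 true psi) x y) (pd4 d psi x y)
  + lor (pd4 false (pd4 false psi) x y) (pd4 d psi x y) = 0.
Proof.
  intros Hxy.
  assert (Hsq : forall e,
    pd d (fun a b => lor (pd4 e psi a b) (pd4 e psi a b)) x y = pd d (lam psi) x y).
  { intros e. apply (pd_ext U HU); auto. intros a b Hab. apply lor_pd4_psi_sq, Hab. }
  pose proof (Hsq true) as Ex. pose proof (Hsq false) as Ey.
  rewrite (pd_lor U) in Ex, Ey; auto using smooth_pd4_psi.
  pose proof (pd_lor_const_on U HU (negb d) _ _ 0 x y (smooth_pd4_psi true) (smooth_pd4_psi false)
    Hxy lor_psi_x_psi_y) as E.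
  pose proof (pd4_psi_comm x y Hxy) as C.
  destruct d; cbn [negb] in E; rewrite ?C in *;
    rewrite (lor_sym (pd4 true psi x y)) in Ex, E; rewrite (lor_sym (pd4 false psi x y)) in Ey; lra.
Qed.

Lemma lor_frame x y a b : U x y ->
  lor a b = lor a (pd4 true psi x y) * lor b (pd4 true psi x y) / lam psi x y
            + lor a (pd4 false psi x y) * lor b (pd4 false psi x y) / lam psi x y
            + lor a (eta x y) * lor b (eta x y) - lor a (vert psi x y) * lor b (vert psi x y).
Proof.
  intros Hxy. apply lor_frame_expansion.
  - apply Rgt_not_eq, lam_pos, Hxy.
  - apply (lor_pd4_psi_sq true), Hxy.
  - apply (lor_pd4_psi_sq false), Hxy.
  - apply lor_eta_eta, Hxy.
  - apply lor_vert_vert, Hxy.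
  - apply lor_psi_x_psi_y, Hxy.
  - rewrite lor_sym. apply (lor_eta_pd4_psi true), Hxy.
  - rewrite lor_sym. apply (lor_vert_pd4_psi true), Hxy.
  - rewrite lor_sym. apply (lor_eta_pd4_psi false), Hxy.
  - rewrite lor_sym. apply (lor_vert_pd4_psi false), Hxy.
  - apply lor_eta_vert, Hxy.
Qed.

Lemma lor_pd4_eta_pd4_eta d e x y : U x y ->
  lor (pd4 d eta x y) (pd4 e eta x y) =
  (lor (eta x y) (pd4 d (pd4 true psi) x y) * lor (eta x y) (pd4 e (pd4 true psi) x y)
   + lor (eta x y) (pd4 d (pd4 false psi) x y) * lor (eta x y) (pd4 e (pd4 false psi) x y)) / lam psi x y
  - c3 (eta x y) ^ 2 * c3 (pd4 d psi x y) * c3 (pd4 e psi x y).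
Proof.
  intros Hxy. rewrite (lor_frame x y) by exact Hxy.
  rewrite !lor_pd4_eta_pd4_psi, !lor_pd4_eta_eta, !lor_pd4_eta_vert by exact Hxy.
  field. apply Rgt_not_eq, lam_pos, Hxy.
Qed.

Lemma c3_pd4_eta d x y : U x y ->
  c3 (pd4 d eta x y) =
  - (lor (eta x y) (pd4 d (pd4 true psi) x y) * c3 (pd4 true psi x y)
     + lor (eta x y) (pd4 d (pd4 false psi) x y) * c3 (pd4 false psi x y)) / lam psi x y.
Proof.
  intros Hxy. rewrite <- lor_e3, lor_sym, (lor_frame x y) by exact Hxy.
  rewrite !lor_pd4_eta_pd4_psi, !lor_pd4_eta_eta, !lor_pd4_eta_vert, !lor_e3 by exact Hxy.
  rewrite c3_vert. field. apply Rgt_not_eq, lam_pos, Hxy.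
Qed.

Lemma lam_angle_sq x y : U x y ->
  lam psi x y * c3 (eta x y) ^ 2 = lam psi x y - c3 (pd4 true psi x y) ^ 2 - c3 (pd4 false psi x y) ^ 2.
Proof.
  intros Hxy. pose proof (lam_pos x y Hxy).
  assert (E : lor e3 e3 = 1) by (unfold lor; simpl; ring).
  rewrite (lor_frame x y), !lor_e3, c3_vert in E by exact Hxy.
  apply (f_equal (Rmult (lam psi x y))) in E. rewrite Rmult_1_r in E.
  rewrite <- E at 2. field. lra.
Qed.

Hypothesis Hu : forall x y, U x y -> 0 < angle eta x y.

Lemma angle_neq0 x y : U x y -> c3 (eta x y) <> 0.
Proof. intros Hxy. apply Rgt_not_eq, Hu, Hxy. Qed.

Lemma smooth_angle : smooth U (comp3 eta).
Proof. apply smooth_eta. Qed.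

Lemma smooth_sharp_factor : smooth U (sharp_factor eta).
Proof.
  apply (smooth_ext U HU (fun a b => 2 * / (comp3 eta a b * comp3 eta a b))).
  - intros a b Hab. unfold sharp_factor, angle. field. apply angle_neq0, Hab.
  - apply (smooth_mult U HU); [apply (smooth_const U HU)|]. apply (smooth_inv U HU).
    + apply (smooth_mult U HU); apply smooth_angle.
    + intros a b Hab. apply Rmult_integral_contrapositive_currified; apply angle_neq0, Hab.
Qed.

Lemma pd_sharp_factor d x y : U x y ->
  pd d (sharp_factor eta) x y = -4 * c3 (pd4 d eta x y) / c3 (eta x y) ^ 3.
Proof.
  intros Hxy. rewrite c3_pd4.
  rewrite (pd_div_sq U d 2 (comp3 eta));
    [unfold comp3, Rdiv; ring|apply smooth_angle|exact Hxy|apply angle_neq0, Hxy].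
Qed.

Lemma pd_pd_sharp_factor d x y : U x y ->
  pd d (pd d (sharp_factor eta)) x y =
  -4 * c3 (pd4 d (pd4 d eta) x y) / c3 (eta x y) ^ 3
  + 12 * c3 (pd4 d eta x y) ^ 2 / c3 (eta x y) ^ 4.
Proof.
  intros Hxy.
  rewrite (pd_ext U HU d _ (fun a b => -4 * comp3 (pd4 d eta) a b / comp3 eta a b ^ 3)).
  - rewrite (pd_div_cube U d (-4) (comp3 eta) (comp3 (pd4 d eta))), <- !c3_pd4.
    + unfold comp3. field. apply angle_neq0, Hxy.
    + apply smooth_angle.
    + apply smooth_pd4_eta.
    + exact Hxy.
    + apply angle_neq0, Hxy.
  - intros a b Hab. rewrite pd_sharp_factor by exact Hab. reflexivity.
  - exact Hxy.
Qed.

Lemma pd4_psi_sharp d x y : U x y ->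
  pd4 d (psi_sharp psi eta) x y =
  add4 (opp4 (pd4 d psi x y))
    (add4 (scal4 (pd d (sharp_factor eta) x y) (add4 (eta x y) (vert psi x y)))
          (scal4 (sharp_factor eta x y) (add4 (pd4 d eta x y) (vproj (pd4 d psi x y))))).
Proof.
  intros Hxy. rewrite psi_sharpE.
  rewrite (pd4_add U d), pd4_opp, (pd4_scal U d), (pd4_add U d), (pd4_vert d psi);
  auto using smooth_psi, smooth_eta, smooth_vert, smooth_sharp_factor, smooth4_opp, smooth4_scal,
    smooth4_add.
Qed.

Lemma pd4_pd4_psi_sharp d x y : U x y ->
  pd4 d (pd4 d (psi_sharp psi eta)) x y =
  add4 (opp4 (pd4 d (pd4 d psi) x y))
    (add4 (add4 (scal4 (pd d (pd d (sharp_factor eta)) x y) (add4 (eta x y) (vert psi x y)))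
                (scal4 (pd d (sharp_factor eta) x y) (add4 (pd4 d eta x y) (vproj (pd4 d psi x y)))))
          (add4 (scal4 (pd d (sharp_factor eta) x y) (add4 (pd4 d eta x y) (vproj (pd4 d psi x y))))
                (scal4 (sharp_factor eta x y)
                   (add4 (pd4 d (pd4 d eta) x y) (vproj (pd4 d (pd4 d psi) x y)))))).
Proof.
  intros Hxy.
  rewrite (pd4_ext U HU d _ (fun a b => add4 (opp4 (pd4 d psi a b))
    (add4 (scal4 (pd d (sharp_factor eta) a b) (add4 (eta a b) (vert psi a b)))
          (scal4 (sharp_factor eta a b) (add4 (pd4 d eta a b) (vproj (pd4 d psi a b)))))))
    by (try exact Hxy; intros a b Hab; apply pd4_psi_sharp, Hab).
  assert (Hs1 := smooth_pd U d _ smooth_sharp_factor).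
  assert (Hv := smooth4_vproj U HU _ (smooth_pd4_psi d)).
  rewrite (pd4_add U d), pd4_opp, (pd4_add U d), !(pd4_scal U d), !(pd4_add U d), !(pd4_vproj d),
    (pd4_vert d);
  auto using smooth_psi, smooth_eta, smooth_vert, smooth_sharp_factor, smooth_pd4_psi, smooth_pd4_eta,
    smooth4_opp, smooth4_scal, smooth4_add.
Qed.

Hypothesis HH : forall x y, U x y -> mean_curv psi eta x y = 1 / 2.

Lemma lor_eta_laplacian_psi x y : U x y ->
  lor (eta x y) (pd4 true (pd4 true psi) x y) + lor (eta x y) (pd4 false (pd4 false psi) x y)
  = lam psi x y.
Proof.
  intros Hxy. pose proof (HH x y Hxy) as E. pose proof (lam_pos x y Hxy).
  unfold mean_curv in E. rewrite lor_add_l, !(lor_sym _ (eta x y)) in E.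
  apply (Rmult_eq_compat_r (2 * lam psi x y)) in E. field_simplify in E; [exact E|lra].
Qed.

Lemma c3_laplacian_psi x y : U x y ->
  c3 (pd4 true (pd4 true psi) x y) + c3 (pd4 false (pd4 false psi) x y)
  = lam psi x y * c3 (eta x y).
Proof.
  intros Hxy. rewrite <- c3_add, <- lor_e3, lor_sym, (lor_frame x y) by exact Hxy.
  rewrite !lor_add_l, (lor_laplacian_psi_pd4_psi true), (lor_laplacian_psi_pd4_psi false), !lor_e3,
    c3_vert, !(lor_sym _ (eta x y)), lor_eta_laplacian_psi by exact Hxy.
  field. apply Rgt_not_eq, lam_pos, Hxy.
Qed.

Section AtPoint.
Variables x y : R.
Hypothesis Hxy : U x y.

Ltac pose_frame_facts :=
  pose proof (lor_pd4_psi_sq true x y Hxy); pose proof (lor_pd4_psi_sq false x y Hxy);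
  pose proof (lor_psi_x_psi_y x y Hxy); pose proof (lor_eta_eta x y Hxy);
  pose proof (lor_eta_vert x y Hxy); pose proof (lor_vert_vert x y Hxy);
  pose proof (lor_eta_pd4_psi true x y Hxy); pose proof (lor_eta_pd4_psi false x y Hxy);
  pose proof (lor_vert_pd4_psi true x y Hxy); pose proof (lor_vert_pd4_psi false x y Hxy);
  pose proof (lor_pd4_eta_eta true x y Hxy); pose proof (lor_pd4_eta_eta false x y Hxy);
  pose proof (lor_pd4_eta_pd4_psi true true x y Hxy);
  pose proof (lor_pd4_eta_pd4_psi true false x y Hxy);
  pose proof (lor_pd4_eta_pd4_psi false true x y Hxy);
  pose proof (lor_pd4_eta_pd4_psi false false x y Hxy);
  pose proof (lor_pd4_eta_vert true x y Hxy); pose proof (lor_pd4_eta_vert false x y Hxy);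
  pose proof (lor_pd4_eta_pd4_eta true true x y Hxy);
  pose proof (lor_pd4_eta_pd4_eta true false x y Hxy);
  pose proof (lor_pd4_eta_pd4_eta false false x y Hxy);
  pose proof (c3_pd4_eta true x y Hxy); pose proof (c3_pd4_eta false x y Hxy);
  pose proof (lor_pd4_pd4_psi_vert true x y Hxy); pose proof (lor_pd4_pd4_psi_vert false x y Hxy);
  pose proof (lor_pd4_pd4_eta_eta true x y Hxy); pose proof (lor_pd4_pd4_eta_eta false x y Hxy);
  pose proof (lor_pd4_pd4_eta_vert true x y Hxy); pose proof (lor_pd4_pd4_eta_vert false x y Hxy);
  pose proof (lor_eta_laplacian_psi x y Hxy);
  assert (c3 (pd4 false (pd4 false psi) x y)
          = lam psi x y * c3 (eta x y) - c3 (pd4 true (pd4 true psi) x y))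
    by (pose proof (c3_laplacian_psi x y Hxy); lra).

Ltac rewrite_pairings :=
  repeat match goal with
  | H : lor ?a ?b = _ |- context [lor ?a ?b] => rewrite H
  | H : lor ?a ?b = _ |- context [lor ?b ?a] => rewrite (lor_sym b a), H
  | H : c3 ?a = _ |- context [c3 ?a] => rewrite H
  end.

Ltac clear_except_goal := repeat match goal with H : _ |- _ => clear H end.

(* Expand every Lorentz product in the frame (psi_x, psi_y, eta, N), leaving a rational function of
   l = lam, u, hx, hy, L = <eta, psi_xx> and M = <eta, psi_xy>. *)
Ltac expand_in_frame :=
  pose_frame_facts;
  rewrite ?(pd4_psi_comm x y Hxy) in *;
  unfold sharp_factor, angle, comp3, opp4;
  autorewrite with lor_expand; rewrite_pairings;
  rewrite ?(lor_sym (pd4 true (pd4 true psi) x y) (eta x y)),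
    ?(lor_sym (pd4 false (pd4 false psi) x y) (eta x y));
  replace (lor (eta x y) (pd4 false (pd4 false psi) x y))
    with (lam psi x y - lor (eta x y) (pd4 true (pd4 true psi) x y)) by lra;
  pose proof (lam_pos x y Hxy) as Hlam;
  assert (Hu0 : 0 < c3 (eta x y)) by exact (Hu x y Hxy);
  pose proof (lam_angle_sq x y Hxy) as Hrel;
  set (L := lor (eta x y) (pd4 true (pd4 true psi) x y)) in *;
  set (M := lor (eta x y) (pd4 true (pd4 false psi) x y)) in *;
  set (l := lam psi x y) in *; set (u := c3 (eta x y)) in *;
  set (hx := c3 (pd4 true psi x y)) in *; set (hy := c3 (pd4 false psi x y)) in *;
  clearbody L M l u hx hy; revert Hlam Hu0 Hrel; clear_except_goal; intros Hlam Hu0 Hrel.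

Ltac solve_in_frame := expand_in_frame;
  match goal with Hrel : ?l * ?u ^ 2 = ?l - ?hx ^ 2 - ?hy ^ 2 |- _ =>
    close_modulo_angle_relation l u hx hy Hrel end.

Lemma lor_psi_sharp_x_psi_sharp_y :
  lor (pd4 true (psi_sharp psi eta) x y) (pd4 false (psi_sharp psi eta) x y) = 0.
Proof.
  rewrite (pd4_psi_sharp true x y Hxy), (pd4_psi_sharp false x y Hxy).
  rewrite (pd_sharp_factor true x y Hxy), (pd_sharp_factor false x y Hxy).
  solve_in_frame.
Qed.

Lemma lor_pd4_psi_sharp_sq d :
  lor (pd4 d (psi_sharp psi eta) x y) (pd4 d (psi_sharp psi eta) x y) = lam_sharp psi eta x y.
Proof.
  unfold lam_sharp. rewrite Cmod_sq, ARQ_re, ARQ_im, (HH x y Hxy).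
  rewrite (pd4_psi_sharp d x y Hxy), (pd_sharp_factor d x y Hxy).
  destruct d; solve_in_frame.
Qed.

Lemma psi_sharp_in_H2xR : in_H2xR (psi_sharp psi eta x y).
Proof.
  split.
  - transitivity (lor (vproj (psi_sharp psi eta x y)) (vproj (psi_sharp psi eta x y)));
      [unfold lor; simpl; ring|].
    rewrite vproj_psi_sharp. solve_in_frame.
  - destruct (proj2 Hpsi x y Hxy) as [[HN0 HN] _].
    pose proof (lor_eta_vert x y Hxy) as E1. pose proof (lor_eta_eta x y Hxy) as E2.
    pose proof (lam_angle_sq x y Hxy). pose proof (lam_pos x y Hxy). pose proof (Hu x y Hxy).
    unfold lor in E1, E2. simpl in E1, E2. unfold angle, comp3 in *.
    eapply Rlt_le_trans.
    + apply (sharp_time_component_pos (c0 (psi x y)) (c1 (psi x y)) (c2 (psi x y))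
        (c0 (eta x y)) (c1 (eta x y)) (c2 (eta x y)) (c3 (eta x y))); try lra. nra.
    + right. unfold psi_sharp, angle, comp3. simpl. ring.
Qed.

Lemma lor_eta_sharp_sq : lor (eta_sharp psi eta x y) (eta_sharp psi eta x y) = 1.
Proof. unfold eta_sharp. rewrite vproj_psi_sharp. solve_in_frame. Qed.

Lemma lor_eta_sharp_vert : lor (eta_sharp psi eta x y) (vproj (psi_sharp psi eta x y)) = 0.
Proof. unfold eta_sharp. rewrite vproj_psi_sharp. solve_in_frame. Qed.

Lemma lor_eta_sharp_pd4_psi_sharp d :
  lor (eta_sharp psi eta x y) (pd4 d (psi_sharp psi eta) x y) = 0.
Proof.
  unfold eta_sharp. rewrite vproj_psi_sharp, (pd4_psi_sharp d x y Hxy), (pd_sharp_factor d x y Hxy).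
  destruct d; solve_in_frame.
Qed.

Lemma lor_laplacian_psi_sharp_eta_sharp :
  lor (add4 (pd4 true (pd4 true (psi_sharp psi eta)) x y)
            (pd4 false (pd4 false (psi_sharp psi eta)) x y))
      (eta_sharp psi eta x y) = lam_sharp psi eta x y.
Proof.
  unfold lam_sharp. rewrite Cmod_sq, ARQ_re, ARQ_im, (HH x y Hxy).
  rewrite (pd4_pd4_psi_sharp true x y Hxy), (pd4_pd4_psi_sharp false x y Hxy),
    (pd_pd_sharp_factor true x y Hxy), (pd_pd_sharp_factor false x y Hxy),
    (pd_sharp_factor true x y Hxy), (pd_sharp_factor false x y Hxy).
  unfold eta_sharp. rewrite vproj_psi_sharp. solve_in_frame.
Qed.

End AtPoint.

Lemma lam_psi_sharp x y : U x y -> lam (psi_sharp psi eta) x y = lam_sharp psi eta x y.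
Proof. intros Hxy. exact (lor_pd4_psi_sharp_sq x y Hxy true). Qed.

Lemma smooth_psi_sharp : smooth4 U (psi_sharp psi eta).
Proof.
  rewrite psi_sharpE. apply (smooth4_add U HU).
  - apply (smooth4_opp U HU), smooth_psi.
  - apply (smooth4_scal U HU); [apply smooth_sharp_factor|]. apply (smooth4_add U HU).
    + apply smooth_eta.
    + apply smooth_vert.
Qed.

Lemma smooth_eta_sharp : smooth4 U (eta_sharp psi eta).
Proof.
  apply (smooth4_add U HU).
  - apply (smooth4_add U HU); [apply smooth_eta|apply smooth_vert].
  - apply (smooth4_opp U HU), (smooth4_vproj U HU), smooth_psi_sharp.
Qed.

Hypothesis HQ : forall x y, U x y -> ARQ psi eta x y <> RtoC 0.

Lemma lam_sharp_pos x y : U x y -> 0 < lam_sharp psi eta x y.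
Proof.
  intros Hxy. pose proof (lam_pos x y Hxy). pose proof (Hu x y Hxy).
  assert (0 < Cmod (ARQ psi eta x y)) by (apply Cmod_gt_0, HQ, Hxy).
  unfold lam_sharp.
  apply Rdiv_lt_0_compat; [|apply Rmult_lt_0_compat; [|apply pow_lt]; assumption].
  apply Rmult_lt_0_compat; [lra|apply pow_lt; assumption].
Qed.

Lemma conformal_immersion_psi_sharp : conformal_immersion U (psi_sharp psi eta).
Proof.
  split; [apply smooth_psi_sharp|]. intros x y Hxy.
  split; [apply psi_sharp_in_H2xR, Hxy|]. rewrite lam_psi_sharp by exact Hxy.
  split; [apply lam_sharp_pos, Hxy|]. split.
  - exact (lor_pd4_psi_sharp_sq x y Hxy false).
  - exact (lor_psi_sharp_x_psi_sharp_y x y Hxy).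
Qed.

Lemma canonical_normal_eta_sharp : canonical_normal U (psi_sharp psi eta) (eta_sharp psi eta).
Proof.
  split; [split|].
  - apply smooth_eta_sharp.
  - intros x y Hxy. split; [apply lor_eta_sharp_sq, Hxy|]. split; [apply lor_eta_sharp_vert, Hxy|].
    split; [exact (lor_eta_sharp_pd4_psi_sharp x y Hxy true)
           |exact (lor_eta_sharp_pd4_psi_sharp x y Hxy false)].
  - intros x y Hxy. rewrite angle_eta_sharp. apply Hu, Hxy.
Qed.

Lemma mean_curv_psi_sharp x y : U x y ->
  mean_curv (psi_sharp psi eta) (eta_sharp psi eta) x y = 1 / 2.
Proof.
  intros Hxy. pose proof (lam_sharp_pos x y Hxy).
  unfold mean_curv. rewrite lam_psi_sharp by exact Hxy.
  change (Dx4 (Dx4 (psi_sharp psi eta)) x y) with (pd4 true (pd4 true (psi_sharp psi eta)) x y).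
  change (Dy4 (Dy4 (psi_sharp psi eta)) x y) with (pd4 false (pd4 false (psi_sharp psi eta)) x y).
  rewrite lor_laplacian_psi_sharp_eta_sharp by exact Hxy. field. lra.
Qed.

End ConformalImmersion.

Theorem mainTheorem11 (U : sdom) (psi eta : vmap) :
  open_dom U ->
  conformal_immersion U psi ->
  canonical_normal U psi eta ->
  (forall x y, U x y -> mean_curv psi eta x y = 1 / 2) ->
  (forall x y, U x y -> ARQ psi eta x y <> RtoC 0) ->
  (forall x y, U x y ->
     psi_sharp psi eta x y
     = add4 (opp4 (psi x y)) (scal4 (2 / angle eta x y) (hypGauss psi eta x y))) /\
  conformal_immersion U (psi_sharp psi eta) /\
  (forall x y, U x y -> lam (psi_sharp psi eta) x y = lam_sharp psi eta x y) /\
  exists eta_s : vmap,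
    canonical_normal U (psi_sharp psi eta) eta_s /\
    (forall x y, U x y ->
       mean_curv (psi_sharp psi eta) eta_s x y = 1 / 2 /\
       angle eta_s x y = angle eta x y /\
       hypGauss (psi_sharp psi eta) eta_s x y = hypGauss psi eta x y).
Proof.
  intros HU Hpsi [Heta Hu] HH HQ.
  split; [|split; [|split]].
  - intros x y Hxy. apply psi_sharp_hypGauss, Rgt_not_eq, Hu, Hxy.
  - apply conformal_immersion_psi_sharp; assumption.
  - intros x y Hxy. apply (lam_psi_sharp U); assumption.
  - exists (eta_sharp psi eta). split.
    + apply canonical_normal_eta_sharp; assumption.
    + intros x y Hxy. split; [|split].
      * apply (mean_curv_psi_sharp U); assumption.
      * apply angle_eta_sharp.
      * apply hypGauss_eta_sharp.
Qed.
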